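(* Let $m,n,s,k$ be even integers such that $2\leqslant s\leqslant n$, $2\leqslant k\leqslant m$ and $ms=nk$, and let $c\geqslant 1$. For every abelian group $\Gamma$ of order $nkc$ there exists an $\mathrm{MRS}_\Gamma(m,n;s,k;c)$.
   Context: For positive integers $m,n,s,k,c$ and an abelian group $\Gamma$ of order $nkc$, an $\mathrm{MRS}_\Gamma(m,n;s,k;c)$ is a set of $c$ partially filled $m\times n$ arrays (some cells may be empty) with entries in $\Gamma$ such that: every element of $\Gamma$ appears exactly once and in a unique array; in every array each row contains exactly $s$ filled cells and each column contains exactly $k$ filled cells; and there exist $\omega,\delta\in\Gamma$ such that in every array each row sum is $\omega$ and each column sum is $\delta$. *)

From mathcomp Require Import all_boot all_order all_algebra.
Set Implicit Arguments. Unset Strict Implicit. Unset Printing Implicit Defensive.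
Import GRing.Theory.
Local Open Scope ring_scope.

(* A family of c partially filled m x n arrays with entries in G:
   A t i j = Some g  means cell (i,j) of array t is filled with g,
   A t i j = None    means the cell is empty. *)
Definition arrays (G : Type) (m n c : nat) := 'I_c -> 'I_m -> 'I_n -> option G.

(* entry value, 0 for empty cells (so sums range over filled cells) *)
Definition val0 (G : zmodType) (x : option G) : G := if x is Some g then g else 0.

Definition is_MRS (G : finZmodType) (m n s k c : nat) (A : arrays G m n c) : Prop :=
  (forall g : G, #|[set p : 'I_c * 'I_m * 'I_n | A p.1.1 p.1.2 p.2 == Some g]| = 1%N)
  /\ (forall (t : 'I_c) (i : 'I_m), #|[set j : 'I_n | A t i j != None]| = s)
  /\ (forall (t : 'I_c) (j : 'I_n), #|[set i : 'I_m | A t i j != None]| = k)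
  /\ exists omega delta : G,
       (forall (t : 'I_c) (i : 'I_m), \sum_(j : 'I_n) val0 (A t i j) = omega)
    /\ (forall (t : 'I_c) (j : 'I_n), \sum_(i : 'I_m) val0 (A t i j) = delta).

Definition MRS_exists (G : finZmodType) (m n s k c : nat) : Prop :=
  #|G| = (n * k * c)%N /\ exists A : arrays G m n c, @is_MRS G m n s k c A.

From mathcomp Require Import all_boot all_order all_algebra all_fingroup pgroup.
From mathcomp Require Import zify ring.
Set Implicit Arguments. Unset Strict Implicit. Unset Printing Implicit Defensive.
Import GRing.Theory.

(* Halve the parameters: m = 2m', n = 2n', s = 2s', k = 2k'.  As 4 divides
   |G|, there are an involution d and an alpha outside 2G and 2G + d.  Then
   x |-> alpha - x and x |-> x + d generate a Klein four-group acting freely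
   on G, whose c m' s' orbits are {x, alpha - x, alpha + d - x, x + d}.  Take
   an m' x n' pattern with s' filled cells per row and k' per column, and
   replace, in each of c copies, every filled cell by the 2 x 2 block
   [[x, alpha - x], [alpha + d - x, x + d]] of its own orbit: rows then sum to
   s' alpha and columns to k' (alpha + d). *)

Lemma big_ord_double (R : Type) (idx : R) (op : Monoid.law idx) n (F : nat -> R) :
  \big[op/idx]_(j < n.*2) F j = \big[op/idx]_(j < n) op (F j.*2) (F j.*2.+1).
Proof.
elim: n => [|n IHn]; first by rewrite !big_ord0.
by rewrite doubleS !big_ord_recr /= IHn Monoid.mulmA.
Qed.

Lemma sum_nat_pred (T : finType) (P : pred T) : \sum_(x : T) (P x : nat) = #|[set x | P x]|.
Proof. by rewrite -sum1dep_card [RHS]big_mkcond; apply: eq_bigr => x _; case: (P x). Qed.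

Lemma card_ord_half n (P : pred nat) :
  #|[set j : 'I_n.*2 | P j./2]| = #|[set j : 'I_n | P j]|.*2.
Proof.
rewrite -(sum_nat_pred (fun j : 'I_n.*2 => P j./2)) -sum_nat_pred -[in RHS]addnn -big_split /=.
rewrite (big_ord_double addn _ (fun j => (P j./2 : nat))).
by apply: eq_bigr => j _; rewrite doubleK /= uphalf_double.
Qed.

Lemma card_set_const_rows (T1 T2 : finType) (P : pred (T1 * T2)) r :
  (forall x, #|[set y | P (x, y)]| = r) -> #|[set p | P p]| = #|T1| * r.
Proof.
move=> card_row; rewrite -sum1dep_card.
rewrite (eq_bigl (fun p => predT p.1 && P (p.1, p.2))) => [|[] //].
rewrite -(pair_big_dep predT (fun x y => P (x, y)) (fun _ _ => 1)) /=.
rewrite (eq_bigr (fun _ => r)) ?sum_nat_const // => x _.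
by rewrite sum1dep_card.
Qed.

Lemma card_fiber_eq1 (T U : finType) (S : {set T}) (f : T -> U) :
  {in S &, injective f} -> #|S| = #|U| -> forall u, #|[set x in S | f x == u]| = 1.
Proof.
move=> f_inj card_S u.
have onto : f @: S = setT.
  by apply/eqP; rewrite eqEcard subsetT cardsT (card_in_imset f_inj) card_S leqnn.
have : u \in f @: S by rewrite onto inE.
case/imsetP=> x xS ->; apply/eqP/cards1P; exists x; apply/setP=> y; rewrite !inE.
apply/andP/eqP=> [[yS /eqP]|->]; [exact: f_inj | by rewrite xS eqxx].
Qed.

Lemma card_ord_image N b (f : nat -> nat) (P : pred nat) :
  {in [pred x | x < b] &, injective f} ->
  (forall x, x < b -> f x < N /\ P (f x)) ->
  (forall w, w < N -> P w -> exists2 x, x < b & w = f x) ->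
  #|[set w : 'I_N | P w]| = b.
Proof.
move=> f_inj f_in f_onto; case: b f_inj f_in f_onto => [|b] f_inj f_in f_onto.
  apply/eqP; rewrite cards_eq0; apply/eqP/setP=> w; rewrite !inE.
  by apply/negbTE/negP=> /(f_onto w (ltn_ord w))[].
have [f0N _] := f_in 0 isT.
pose g (x : 'I_b.+1) : 'I_N := insubd (Ordinal f0N) (f x).
have gE x : val (g x) = f x by rewrite val_insubd; case: (f_in x (ltn_ord x)) => ->.
have -> : [set w : 'I_N | P w] = g @: setT.
  apply/setP=> w; rewrite inE; apply/idP/imsetP => [Pw | [x _ ->]].
    have [x xb wx] := f_onto w (ltn_ord w) Pw.
    by exists (Ordinal xb) => //; apply: val_inj; rewrite gE.
  by rewrite gE; case: (f_in x (ltn_ord x)).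
rewrite card_imset ?cardsT ?card_ord // => x y /(congr1 val); rewrite !gE.
by move/f_inj => exy; apply: val_inj; apply: exy; rewrite inE.
Qed.

Section Doubling.
Local Open Scope ring_scope.
Variable G : finZmodType.

Definition doubling (x : G) : G := x + x.

Lemma doubling_morph : {in [set: G] &, {morph doubling : x y / (x * y)%g}}.
Proof. by move=> x y _ _; rewrite /doubling /= addrACA. Qed.

Definition doubling_morphism := Morphism doubling_morph.

Lemma card_ker_doubling :
  (#|('ker doubling_morphism)%g| * #|(doubling_morphism @* [set: G])%g|)%N = #|G|.
Proof. by rewrite card_morphim setIid (Lagrange (subsetT _)) cardsT. Qed.

Lemma exists_involution (H : {group G}) :
  (2 %| #|H|)%N -> exists2 d, d \in H & (d != 0) && (d + d == 0).
Proof.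
case/(Cauchy (isT : prime 2)) => d dH od; exists d => //.
by rewrite -order_gt1 od; apply/eqP; have := expg_order d; rewrite od.
Qed.

Lemma exists_involution_avoiding_doubles :
  (4 %| #|G|)%N -> exists d alpha : G,
    [/\ d != 0, d + d = 0, forall x, x + x != alpha & forall x, x + x + d != alpha].
Proof.
move=> dvd4G.
set I := (doubling_morphism @* [set: G])%G; set K := ('ker doubling_morphism)%G.
have doubleI x : x + x \in I by rewrite (mem_morphim doubling_morphism) ?inE.
have cardKI : (#|K| * #|I|)%N = #|G| := card_ker_doubling.
have I_gt0 : (0 < #|I|)%N := cardG_gt0 I.
suff [d /andP[d0 /eqP dd] ltBG] : exists2 d : G, (d != 0) && (d + d == 0)
    & (#|I :|: [set (y + d)%R | y in I]| < #|G|)%N.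
  have /subsetPn[alpha _ alphaB] : ~~ ([set: G] \subset I :|: [set (y + d)%R | y in I]).
    by apply: contraL ltBG => /subset_leq_card; rewrite cardsT -leqNgt.
  exists d, alpha; split=> // x; apply: contraNneq alphaB => <-.
    by rewrite inE doubleI.
  by rewrite inE; apply/orP; right; apply/imsetP; exists (x + x).
have involution_ker d : d + d = 0 -> d \in K.
  by move=> dd; apply/kerP; rewrite ?inE.
(* If |2G| is even, take d in 2G, so that 2G + d = 2G; otherwise 4 divides
   the order of the kernel of doubling, so |2G| + |2G + d| <= |G| / 2. *)
have [evenI | oddI] := boolP (2 %| #|I|)%N.
  have [d dI /andP[d0 dd]] := exists_involution evenI; exists d; first by rewrite d0.
  have IdI : [set (y + d)%R | y in I] \subset I.
    by apply/subsetP=> _ /imsetP[y yI ->]; exact: (groupM yI dI).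
  rewrite (setUidPl IdI) -cardKI -{1}[#|I|]mul1n ltn_pmul2r //.
  apply: (@leq_trans #|[set 0%R; d]|); first by rewrite cards2 eq_sym d0.
  apply: subset_leq_card; apply/subsetP=> _ /set2P[]->; first exact: group1.
  exact/involution_ker/eqP.
have cop4I : coprime (2 ^ 2) #|I| by rewrite coprime_pexpl // coprime2n -[odd _]negbK -dvdn2.
have dvd4K : (4 %| #|K|)%N by rewrite -(Gauss_dvdl _ cop4I) cardKI.
have [d dK invd] := exists_involution (dvdn_trans (dvdn_mull 2 (dvdnn 2)) dvd4K).
exists d => //; rewrite (leq_ltn_trans (leq_card_setU _ _)) //.
rewrite (leq_ltn_trans (leq_add (leqnn _) (leq_imset_card _ _))) // -cardKI.
by rewrite addnn -mul2n ltn_pmul2r // (leq_trans _ (dvdn_leq (cardG_gt0 K) dvd4K)).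
Qed.

End Doubling.

Section Tile.
Local Open Scope ring_scope.
Variables (G : zmodType) (d alpha : G).
Hypothesis dd : d + d = 0.

Definition tile (x : G) (a b : bool) : G :=
  match a, b with
  | false, false => x
  | false, true => alpha - x
  | true, false => alpha + d - x
  | true, true => x + d
  end.

Lemma tile_row x a : tile x a false + tile x a true = alpha.
Proof. by case: a; rewrite /= ?subrKC // addrA subrK -addrA dd addr0. Qed.

Lemma tile_col x b : tile x false b + tile x true b = alpha + d.
Proof. by case: b; rewrite /= ?subrKC // addrA subrK. Qed.

Lemma tile_tile x a b a' b' : tile (tile x a b) a' b' = tile x (a (+) a') (b (+) b').
Proof.
have oppd : - d = d by apply/eqP; rewrite eq_sym -addr_eq0 dd.
have ddK y : y + d + d = y by rewrite -addrA dd addr0.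
case: a b a' b' => [] [] [] [] /=; rewrite ?opprD ?opprB ?opprK ?oppd ?addrA ?ddK //;
  by rewrite ?(addrAC alpha d (- alpha)) ?subrr ?add0r ?(addrAC _ (- x) d) ?ddK ?dd ?add0r // addrC.
Qed.

Hypothesis d_neq0 : d != 0.
Hypothesis alpha_not_double : forall x, x + x != alpha.
Hypothesis alpha_not_shifted_double : forall x, x + x + d != alpha.

Lemma tile_fixed x a b : tile x a b = x -> (a, b) = (false, false).
Proof.
case: a b => [] [] //= h.
- by case/negP: d_neq0; rewrite -(inj_eq (addrI x)) h addr0.
- by case/negP: (alpha_not_shifted_double x); rewrite -{1}h subrK -addrA dd addr0.
- by case/negP: (alpha_not_double x); rewrite -{1}h subrK.
Qed.

Lemma tile_inj x a b a' b' : tile x a b = tile x a' b' -> (a, b) = (a', b').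
Proof.
move/(congr1 (fun y => tile y a' b')); rewrite !tile_tile !addbb => /tile_fixed.
by case: a a' b b' => [] [] [] [].
Qed.
End Tile.

Section Seeds.
Local Open Scope ring_scope.
Variables (G : finZmodType) (d alpha : G).
Hypothesis dd : d + d = 0.
Hypothesis d_neq0 : d != 0.
Hypothesis alpha_not_double : forall x, x + x != alpha.
Hypothesis alpha_not_shifted_double : forall x, x + x + d != alpha.

Local Notation tile := (tile d alpha).

Definition orbit (x : G) : {set G} := [set tile x a b | a : bool, b : bool].

Lemma mem_orbit x a b : tile x a b \in orbit x.
Proof. by apply/imset2P; exists a b. Qed.

Lemma orbit_tile x a b : orbit (tile x a b) = orbit x.
Proof.
apply/setP=> y; apply/imset2P/imset2P => -[a' b' _ _ ->].
  by exists (a (+) a') (b (+) b'); rewrite ?tile_tile.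
by exists (a (+) a') (b (+) b'); rewrite ?tile_tile ?addKb.
Qed.

Definition seed (x : G) : G := odflt 0 [pick y in orbit x].

Lemma seed_in_orbit x : exists a b, seed x = tile x a b.
Proof.
rewrite /seed; case: pickP => [y /imset2P[a b _ _ ->] | /(_ x)]; first by exists a, b.
by rewrite (mem_orbit x false false).
Qed.

Lemma seed_tile x a b : seed (tile x a b) = seed x.
Proof. by rewrite /seed orbit_tile. Qed.

Definition seeds : {set G} := [set seed x | x : G].

Lemma seedK x : x \in seeds -> seed x = x.
Proof.
case/imsetP=> y _ ->; have [a [b e]] := seed_in_orbit y.
by rewrite {1}e seed_tile.
Qed.

Lemma tile_seeds_inj x y a b a' b' : x \in seeds -> y \in seeds ->
  tile x a b = tile y a' b' -> [/\ x = y, a = a' & b = b'].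
Proof.
move=> xS yS e; have exy : x = y.
  by rewrite -(seedK xS) -(seedK yS) -(seed_tile x a b) e seed_tile.
by move: e; rewrite exy => /(tile_inj dd d_neq0 alpha_not_double alpha_not_shifted_double)[-> ->].
Qed.

Lemma card_seeds : (4 * #|seeds|)%N = #|G|.
Proof.
pose f (p : G * (bool * bool)) := tile p.1 p.2.1 p.2.2.
have f_inj : {in setX seeds [set: bool * bool] &, injective f}.
  move=> [x [a b]] [y [a' b']] /setXP[/= xS _] /setXP[/= yS _].
  by rewrite /f /= => /(tile_seeds_inj xS yS)[-> -> ->].
rewrite -cardsT; have <- : f @: setX seeds setT = [set: G].
  apply/setP=> z; rewrite inE; apply/imsetP.
  have [a [b e]] := seed_in_orbit z.
  exists (seed z, (a, b)); first by rewrite in_setX in_setT andbT; apply: imset_f.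
  by rewrite /f /= e tile_tile ?addbb.
by rewrite card_in_imset // cardsX cardsT card_prod card_bool mulnC.
Qed.
End Seeds.

Section Layout.
Variables m n s : nat.
Hypotheses (s_gt0 : 0 < s) (s_le_n : s <= n).

(* Cell w < m s lies in row w / s and column w mod n: row i is filled in the
   s cyclically consecutive columns starting at i s mod n. *)
Definition band_cell (i j : nat) : option 'I_(m * s) :=
  [pick w : 'I_(m * s) | (w %/ s == i) && (w %% n == j)].

Lemma band_cell_some i j w : band_cell i j = Some w -> w %/ s = i /\ w %% n = j.
Proof. by rewrite /band_cell; case: pickP => // w' /andP[/eqP <- /eqP <-] [<-]. Qed.

Lemma band_cell_filled i j :
  (band_cell i j != None) = [exists w : 'I_(m * s), (w %/ s == i) && (w %% n == j)].
Proof.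
rewrite /band_cell; case: pickP => [w wij | none]; first by apply/esym/existsP; exists w.
by apply/esym/negbTE/existsPn => w; rewrite none.
Qed.

Lemma eq_divn_modn w w' : w %/ s = w' %/ s -> w %% n = w' %% n -> w = w'.
Proof.
have mod_lt r : r %% s < n := leq_trans (ltn_pmod r s_gt0) s_le_n.
move=> eq_div; rewrite (divn_eq w s) (divn_eq w' s) eq_div => /eqP.
by rewrite eqn_modDl !(modn_small (mod_lt _)) => /eqP ->.
Qed.

Lemma card_row_band i : i < m -> #|[set j : 'I_n | band_cell i j != None]| = s.
Proof.
move=> i_lt_m; have n_gt0 : 0 < n := leq_trans s_gt0 s_le_n.
apply: (@card_ord_image n s (fun x => (i * s + x) %% n) (fun j => band_cell i j != None)).
- move=> x y; rewrite !inE => x_lt y_lt /eqP; rewrite eqn_modDl.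
  by rewrite !modn_small ?(leq_trans _ s_le_n) // => /eqP.
- move=> x x_lt; rewrite ltn_pmod // band_cell_filled; split=> //; apply/existsP.
  have w_lt : i * s + x < m * s by nia.
  by exists (Ordinal w_lt); rewrite /= divnMDl // divn_small // addn0 !eqxx.
- move=> j j_lt; rewrite band_cell_filled => /existsP[w /andP[/eqP <- /eqP <-]].
  by exists (w %% s); rewrite ?ltn_pmod // -divn_eq.
Qed.

Lemma card_col_band k j : m * s = n * k -> j < n ->
  #|[set i : 'I_m | band_cell i j != None]| = k.
Proof.
move=> ms_eq_nk j_lt_n; have n_gt0 : 0 < n := leq_trans s_gt0 s_le_n.
have modj q : (j + q * n) %% n = j by rewrite addnC modnMDl modn_small.
apply: (@card_ord_image m k (fun q => (j + q * n) %/ s) (fun i => band_cell i j != None)).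
- move=> x y _ _ /eq_divn_modn; rewrite !modj => /(_ erefl)/addnI/eqP.
  by rewrite eqn_pmul2r // => /eqP.
- move=> q q_lt; rewrite ltn_divLR // band_cell_filled; split; first by rewrite ms_eq_nk; nia.
  have w_lt : j + q * n < m * s by nia.
  by apply/existsP; exists (Ordinal w_lt); rewrite /= modj !eqxx.
- move=> i i_lt; rewrite band_cell_filled => /existsP[w /andP[/eqP <- /eqP wj]].
  exists (w %/ n); first by rewrite ltn_divLR //; have := ltn_ord w; nia.
  by rewrite -wj addnC -divn_eq.
Qed.
End Layout.

Section DoubledArrays.
Local Open Scope ring_scope.
Variables (G : finZmodType) (d alpha : G).
Hypotheses (dd : d + d = 0) (d_neq0 : d != 0).
Hypotheses (alpha_not_double : forall x, x + x != alpha)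
           (alpha_not_shifted_double : forall x, x + x + d != alpha).
Variables (m n s k c : nat) (cell : nat -> nat -> option 'I_(m * s)).
Hypothesis cell_inj : forall i j i' j' w,
  cell i j = Some w -> cell i' j' = Some w -> i = i' /\ j = j'.
Hypothesis card_row_cells : forall i, (i < m)%N -> #|[set j : 'I_n | cell i j != None]| = s.
Hypothesis card_col_cells : forall j, (j < n)%N -> #|[set i : 'I_m | cell i j != None]| = k.
Hypothesis card_G : #|G| = (4 * (c * (m * s)))%N.

Definition seed_at (x : nat) : G := nth 0 (enum (seeds d alpha)) x.

Definition entry (t i j : nat) : option G :=
  if cell i./2 j./2 is Some w
  then Some (tile d alpha (seed_at (t * (m * s) + w)) (odd i) (odd j)) else None.

Definition doubled : arrays G m.*2 n.*2 c := fun t i j => entry t i j.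

Lemma entry_filled t i j : (entry t i j != None) = (cell i./2 j./2 != None).
Proof. by rewrite /entry; case: cell. Qed.

Lemma card_row_doubled t (i : 'I_m.*2) : #|[set j : 'I_n.*2 | doubled t i j != None]| = s.*2.
Proof.
under eq_finset do rewrite entry_filled.
by rewrite (card_ord_half _ (fun j => cell i./2 j != None)) card_row_cells ?ltn_half_double.
Qed.

Lemma card_col_doubled t (j : 'I_n.*2) : #|[set i : 'I_m.*2 | doubled t i j != None]| = k.*2.
Proof.
under eq_finset do rewrite entry_filled.
by rewrite (card_ord_half _ (fun i => cell i j./2 != None)) card_col_cells ?ltn_half_double.
Qed.

Lemma row_sum_doubled t (i : 'I_m.*2) : \sum_(j < n.*2) val0 (doubled t i j) = alpha *+ s.
Proof.
rewrite (big_ord_double _ _ (fun j => val0 (entry t i j))).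
rewrite (eq_bigr (fun j : 'I_n => alpha *+ (cell i./2 j != None))) => [|j _]; last first.
  rewrite /entry doubleK /= uphalf_double odd_double.
  by case: cell => [w|] /=; rewrite ?tile_row ?addr0.
by rewrite sumrMnr sum_nat_pred card_row_cells ?ltn_half_double.
Qed.

Lemma col_sum_doubled t (j : 'I_n.*2) :
  \sum_(i < m.*2) val0 (doubled t i j) = (alpha + d) *+ k.
Proof.
rewrite (big_ord_double _ _ (fun i => val0 (entry t i j))).
rewrite (eq_bigr (fun i : 'I_m => (alpha + d) *+ (cell i j./2 != None))) => [|i _]; last first.
  rewrite /entry doubleK /= uphalf_double odd_double.
  by case: cell => [w|] /=; rewrite ?tile_col ?addr0.
by rewrite sumrMnr sum_nat_pred card_col_cells ?ltn_half_double.
Qed.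

Lemma card_seeds_doubled : #|seeds d alpha| = (c * (m * s))%N.
Proof.
by apply/eqP; rewrite -(eqn_pmul2l (isT : 0 < 4)%N) (card_seeds dd) // card_G.
Qed.

Lemma seed_at_seeds x : (x < c * (m * s))%N -> seed_at x \in seeds d alpha.
Proof. by move=> x_lt; rewrite /seed_at -mem_enum mem_nth // -cardE card_seeds_doubled. Qed.

Lemma seed_at_inj x y : (x < c * (m * s))%N -> (y < c * (m * s))%N ->
  seed_at x = seed_at y -> x = y.
Proof.
move=> x_lt y_lt; rewrite /seed_at => /eqP.
by rewrite nth_uniq ?enum_uniq -?cardE ?card_seeds_doubled // => /eqP.
Qed.

Lemma entry_inj t i j t' i' j' g : (t < c)%N -> (t' < c)%N ->
  entry t i j = Some g -> entry t' i' j' = Some g -> [/\ t = t', i = i' & j = j'].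
Proof.
move=> t_lt t'_lt; rewrite /entry.
case ew: (cell i./2 j./2) => [w|] //; case ew': (cell i'./2 j'./2) => [w'|] // [<-] [/esym].
have label_lt (t0 : nat) (w0 : 'I_(m * s)) : (t0 < c -> t0 * (m * s) + w0 < c * (m * s))%N.
  by have := ltn_ord w0; nia.
move/(tile_seeds_inj dd d_neq0 alpha_not_double alpha_not_shifted_double
        (seed_at_seeds (label_lt _ _ t_lt)) (seed_at_seeds (label_lt _ _ t'_lt))).
case=> /(seed_at_inj (label_lt _ _ t_lt) (label_lt _ _ t'_lt)) eq_label odd_i odd_j.
have ms_gt0 : (0 < m * s)%N by apply: leq_ltn_trans (ltn_ord w).
have eq_t : t = t'.
  by have := congr1 (divn^~ (m * s)) eq_label; rewrite !divnMDl // !divn_small ?addn0.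
have /val_inj eq_w : val w = val w' by move: eq_label; rewrite eq_t => /addnI.
have [eq_i eq_j] := cell_inj ew (etrans ew' (congr1 Some (esym eq_w))).
by rewrite -[i]odd_double_half -[j]odd_double_half odd_i odd_j eq_i eq_j !odd_double_half.
Qed.

Lemma card_filled_doubled :
  #|[set p : 'I_c * 'I_m.*2 * 'I_n.*2 | doubled p.1.1 p.1.2 p.2 != None]| = #|G|.
Proof.
rewrite (@card_set_const_rows _ _ (fun p => doubled p.1.1 p.1.2 p.2 != None) _
  (fun ti => card_row_doubled ti.1 ti.2)).
by rewrite card_prod !card_ord card_G -!muln2; ring.
Qed.

Lemma card_doubled_fiber g :
  #|[set p : 'I_c * 'I_m.*2 * 'I_n.*2 | doubled p.1.1 p.1.2 p.2 == Some g]| = 1%N.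
Proof.
pose S := [set p : 'I_c * 'I_m.*2 * 'I_n.*2 | doubled p.1.1 p.1.2 p.2 != None].
pose value p := val0 (doubled p.1.1 p.1.2 p.2).
have value_inj : {in S &, injective value}.
  move=> [[t i] j] [[t' i'] j']; rewrite !inE /value /doubled /=.
  case e: (entry t i j) => [h|] //; case e': (entry t' i' j') => [h'|] // _ _ /= eq_h.
  rewrite eq_h in e.
  by case: (entry_inj (ltn_ord t) (ltn_ord t') e e') => /val_inj-> /val_inj-> /val_inj->.
rewrite -(card_fiber_eq1 value_inj card_filled_doubled g).
by apply/eq_card=> p; rewrite !inE /value; case: (doubled _ _ _).
Qed.

Lemma doubled_is_MRS : is_MRS s.*2 k.*2 doubled.
Proof.
split; [exact: card_doubled_fiber | split; [exact: card_row_doubled | split]].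
  exact: card_col_doubled.
exists (alpha *+ s), ((alpha + d) *+ k).
by split; [exact: row_sum_doubled | exact: col_sum_doubled].
Qed.
End DoubledArrays.

Theorem proposition5p10 (m n s k c : nat) :
  ~~ odd m -> ~~ odd n -> ~~ odd s -> ~~ odd k ->
  (2 <= s <= n)%N -> (2 <= k <= m)%N -> (m * s = n * k)%N -> (1 <= c)%N ->
  forall G : finZmodType, #|G| = (n * k * c)%N -> MRS_exists G m n s k c.
Proof.
move=> /even_halfK <- /even_halfK <- /even_halfK <- /even_halfK <- /andP[s_ge2 s_le_n] _.
set m' := m./2; set n' := n./2; set s' := s./2; set k' := k./2.
move=> ms_eq_nk _ G card_G; split=> //.
have s'_gt0 : 0 < s' by move: s_ge2; rewrite -muln2; lia.
have s'_le_n' : s' <= n' by rewrite -leq_double.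
have ms_eq_nk' : m' * s' = n' * k' by move: ms_eq_nk; rewrite -!muln2; lia.
have card_G' : #|G| = 4 * (c * (m' * s')) by rewrite card_G ms_eq_nk' -!muln2; ring.
have dvd4G : 4 %| #|G| by rewrite card_G' dvdn_mulr.
have [d [alpha [d_neq0 dd alpha_not_double alpha_not_shifted_double]]] :=
  exists_involution_avoiding_doubles dvd4G.
exists (doubled d alpha (band_cell m' n' s')).
apply: doubled_is_MRS => //.
- by move=> i j i' j' w /band_cell_some[<- <-] /band_cell_some[<- <-].
- exact: card_row_band s'_gt0 s'_le_n'.
- by move=> j; apply: card_col_band.
Qed.
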